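(* A matrix $M\in\mathbb{R}_+^{p\times q}$ with $\operatorname{rank}(M)\ge 2$ is a slack matrix of some polytope if and only if $$\operatorname{conv}(\text{rows of }M)=\operatorname{aff}(\text{rows of }M)\cap\mathbb{R}_+^q.$$
   Context: For a polytope $P\subseteq\mathbb{R}^n$ with $\dim(P)\ge 1$, a slack matrix of $P$ is any matrix $S=[\mathbb{1},V]\cdot[w,-W]^T\in\mathbb{R}^{p\times q}$ (so $S_{ij}=w_j-W_jv_i$, with $v_i$ the $i$th row of $V$ and $W_j$ the $j$th row of $W$), where $V\in\mathbb{R}^{p\times n}$ satisfies $P=\operatorname{conv}(\text{rows of }V)$ and $W\in\mathbb{R}^{q\times n}$, $w\in\mathbb{R}^q$ satisfy $P=\{x\in\mathbb{R}^n: Wx\le w\}$. A matrix is a slack matrix of some polytope if it is a slack matrix of some polytope of dimension at least one. $\operatorname{aff}$ denotes affine hull. *)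

From HB Require Import structures.
From mathcomp Require Import all_boot all_order all_algebra.
From mathcomp Require Import reals.
Set Implicit Arguments. Unset Strict Implicit. Unset Printing Implicit Defensive.
Import Order.TTheory GRing.Theory Num.Theory.
Local Open Scope ring_scope.

Definition conv_rows (R : numDomainType) (m n : nat) (A : 'M[R]_(m, n))
  (x : 'rV[R]_n) : Prop :=
  exists l : 'I_m -> R, (forall i, 0 <= l i) /\ \sum_i l i = 1 /\
                        x = \sum_i l i *: row i A.

Definition aff_rows (R : numDomainType) (m n : nat) (A : 'M[R]_(m, n))
  (x : 'rV[R]_n) : Prop :=
  exists l : 'I_m -> R, \sum_i l i = 1 /\ x = \sum_i l i *: row i A.

Definition nonneg_vec (R : numDomainType) (n : nat) (x : 'rV[R]_n) : Prop :=
  forall j, 0 <= x 0 j.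

Definition dim_ge1 (R : numDomainType) (n : nat) (P : 'rV[R]_n -> Prop) : Prop :=
  exists x y, P x /\ P y /\ x <> y.

Definition slack_matrix_of (R : numDomainType) (n : nat) (P : 'rV[R]_n -> Prop)
  (p q : nat) (S : 'M[R]_(p, q)) : Prop :=
  exists (V : 'M[R]_(p, n)) (W : 'M[R]_(q, n)) (w : 'cV[R]_q),
    (forall x, P x <-> conv_rows V x) /\
    (forall x, P x <-> (forall j, (W *m x^T) j 0 <= w j 0)) /\
    S = row_mx (const_mx 1 : 'cV[R]_p) V *m (row_mx w (- W))^T.

Definition is_slack_matrix (R : numDomainType) (p q : nat) (S : 'M[R]_(p, q)) : Prop :=
  exists (n : nat) (P : 'rV[R]_n -> Prop), dim_ge1 P /\ slack_matrix_of P S.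

From HB Require Import structures.
From mathcomp Require Import all_boot all_order all_algebra.
From mathcomp Require Import reals.
Set Implicit Arguments. Unset Strict Implicit. Unset Printing Implicit Defensive.
Import Order.TTheory GRing.Theory Num.Theory.
Local Open Scope ring_scope.

(* For a slack matrix S = 1 w^T - V W^T and affine weights c (c 1 = 1) we
   have c S = w^T - (c V) W^T, so c S >= 0 exactly when the point c V
   satisfies the inequalities W x <= w, i.e. lies in P = conv(rows V);
   writing that point as a convex combination d V gives c S = d S.
   Conversely, if conv(rows M) = aff(rows M) /\ R_+^q, pick a row a of M
   and coordinates V for the rows of M - 1 a in a basis B of their span.
   Then t lies in conv(rows V) iff a + t B >= 0, so conv(rows V) is a
   polytope with slack matrix 1 a + V B = M, of dimension at least one as
   soon as M has two distinct rows, which rank M >= 2 guarantees. *)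

Local Notation ones R m := (const_mx 1 : 'cV[R]_m).

Section Combinations.
Variable R : numDomainType.

Lemma mulmx_ones_eq1 m (c : 'rV[R]_m) :
  (c *m ones R m = 1) <-> (\sum_i c 0 i = 1).
Proof.
have -> : c *m ones R m = (\sum_i c 0 i)%:M.
  apply/rowP => j; rewrite !ord1 !mxE eqxx mulr1n.
  by apply: eq_bigr => i _; rewrite mxE mulr1.
split; last by move=> ->.
by move/matrixP=> /(_ 0 0); rewrite !mxE eqxx mulr1n.
Qed.

Lemma sum_scale_rows m n (A : 'M[R]_(m, n)) (l : 'I_m -> R) :
  \sum_i l i *: row i A = (\row_i l i) *m A.
Proof. by rewrite mulmx_sum_row; apply: eq_bigr => i _; rewrite mxE. Qed.

Lemma conv_rowsP m n (A : 'M[R]_(m, n)) x : conv_rows A x <->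
  exists c : 'rV_m, [/\ forall i, 0 <= c 0 i, c *m ones R m = 1 & x = c *m A].
Proof.
split=> [[l [l0 [l1 ->]]] | [c [c0 /mulmx_ones_eq1 c1 ->]]].
  exists (\row_i l i); rewrite sum_scale_rows; split=> [i||//]; first by rewrite mxE.
  by apply/mulmx_ones_eq1; rewrite -l1; apply: eq_bigr => i _; rewrite mxE.
exists (c 0); split=> //; split=> //; rewrite sum_scale_rows.
by congr (_ *m _); apply/rowP => i; rewrite mxE.
Qed.

Lemma aff_rowsP m n (A : 'M[R]_(m, n)) x : aff_rows A x <->
  exists c : 'rV_m, c *m ones R m = 1 /\ x = c *m A.
Proof.
split=> [[l [l1 ->]] | [c [/mulmx_ones_eq1 c1 ->]]].
  exists (\row_i l i); rewrite sum_scale_rows; split=> //.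
  by apply/mulmx_ones_eq1; rewrite -l1; apply: eq_bigr => i _; rewrite mxE.
exists (c 0); split=> //; rewrite sum_scale_rows.
by congr (_ *m _); apply/rowP => i; rewrite mxE.
Qed.

Lemma conv_rows_aff m n (A : 'M[R]_(m, n)) x : conv_rows A x -> aff_rows A x.
Proof. by case=> l [_ [l1 ->]]; exists l. Qed.

Lemma conv_rows_row m n (A : 'M[R]_(m, n)) i : conv_rows A (row i A).
Proof.
apply/conv_rowsP; exists (delta_mx 0 i); split; last by rewrite rowE.
- by move=> j; rewrite mxE; case: (_ && _).
- apply/mulmx_ones_eq1; rewrite (bigD1 i) //= big1 => [|j /negPf neq_ji].
    by rewrite mxE !eqxx addr0.
  by rewrite mxE neq_ji andbF.
Qed.

Lemma dim_ge1_conv_rows m n (A : 'M[R]_(m, n)) i k :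
  row i A != row k A -> dim_ge1 (conv_rows A).
Proof.
move=> /eqP neq_ik; exists (row i A), (row k A).
by split; [|split]; rewrite //; apply: conv_rows_row.
Qed.

End Combinations.

Section SlackMatrixConvRows.
Variables (R : numDomainType) (n p q : nat) (P : 'rV[R]_n -> Prop).
Variables (V : 'M[R]_(p, n)) (W : 'M[R]_(q, n)) (w : 'cV[R]_q).
Hypothesis P_conv : forall x, P x <-> conv_rows V x.
Hypothesis P_ineq : forall x, P x <-> (forall j, (W *m x^T) j 0 <= w j 0).
Let S := row_mx (ones R p) V *m (row_mx w (- W))^T.

Lemma slack_affine_comb (c : 'rV_p) :
  c *m ones R p = 1 -> c *m S = w^T - c *m V *m W^T.
Proof.
move=> c1; rewrite /S tr_row_mx mul_row_col linearN /= mulmxN.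
by rewrite mulmxDr mulmxN !mulmxA c1 mul1mx.
Qed.

Lemma slack_affine_comb_ge0 (c : 'rV_p) :
  c *m ones R p = 1 -> nonneg_vec (c *m S) <-> P (c *m V).
Proof.
move=> c1; rewrite P_ineq slack_affine_comb //.
have entry j : (w^T - c *m V *m W^T) 0 j = w j 0 - (W *m (c *m V)^T) j 0.
  rewrite [in RHS](_ : W *m _ = (c *m V *m W^T)^T); last first.
    by rewrite !trmx_mul trmxK mulmxA.
  by rewrite [in LHS]mxE !mxE.
by split=> ge0 j; have := ge0 j; rewrite entry subr_ge0.
Qed.

Lemma conv_rows_slack x : conv_rows S x <-> aff_rows S x /\ nonneg_vec x.
Proof.
split=> [conv_x | [/aff_rowsP [c [c1 ->]] ge0]].
  split; first exact: conv_rows_aff.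
  have /conv_rowsP [c [c0 c1 ->]] := conv_x.
  by apply/slack_affine_comb_ge0 => //; apply/P_conv/conv_rowsP; exists c.
have /P_conv/conv_rowsP [d [d0 d1 cVdV]] := (slack_affine_comb_ge0 c1).1 ge0.
by apply/conv_rowsP; exists d; split; rewrite // !slack_affine_comb // cVdV.
Qed.

End SlackMatrixConvRows.

Lemma slack_matrix_conv_rows (R : numDomainType) n (P : 'rV[R]_n -> Prop)
    p q (S : 'M[R]_(p, q)) :
  slack_matrix_of P S -> forall x, conv_rows S x <-> aff_rows S x /\ nonneg_vec x.
Proof. by case=> V [W [w [P_conv [P_ineq ->]]]]; apply: conv_rows_slack. Qed.

Section ConvRowsSlackMatrix.
Variables (R : numFieldType) (p q : nat) (M : 'M[R]_(p, q)) (i0 : 'I_p).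
Hypothesis conv_rowsM :
  forall x, conv_rows M x <-> aff_rows M x /\ nonneg_vec x.

Let a := row i0 M.
Let D := M - ones R p *m a.
Let B := row_base D.
Let V := D *m pinvmx B.

Lemma row_coord_mul : V *m B = D.
Proof. by rewrite mulmxKpV // eq_row_base submx_refl. Qed.

Lemma affine_comb_row_coord (c : 'rV_p) :
  c *m ones R p = 1 -> c *m V *m B = c *m M - a.
Proof. by move=> c1; rewrite -mulmxA row_coord_mul mulmxBr mulmxA c1 mul1mx. Qed.

Lemma aff_rows_add_rowspace (y : 'rV_q) : (y <= D)%MS -> aff_rows M (a + y).
Proof.
move=> yD; pose c := y *m pinvmx D; pose s := (c *m ones R p) 0 0.
have cD : c *m D = y by rewrite mulmxKpV.
apply/aff_rowsP; exists (c + (1 - s) *: delta_mx 0 i0).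
rewrite !mulmxDl -!scalemxAl -!rowE (mx11_scalar (c *m _)) -/s.
split; first by apply/rowP => j; rewrite !ord1 !mxE /= mulr1n mulr1 addrC subrK.
rewrite -cD mulmxBr mulmxA (mx11_scalar (c *m _)) -/s mul_scalar_mx.
by rewrite scalerBl scale1r addrCA addrA.
Qed.

Lemma conv_rows_row_coord (t : 'rV_(\rank D)) :
  conv_rows V t <-> nonneg_vec (a + t *m B).
Proof.
split=> [/conv_rowsP [c [c0 c1 ->]] | ge0].
  rewrite affine_comb_row_coord // addrC subrK.
  by apply: (proj2 ((conv_rowsM _).1 _)); apply/conv_rowsP; exists c.
have tBD : (t *m B <= D)%MS by rewrite -(eq_row_base D) submxMl.
have /conv_rowsM/conv_rowsP [c [c0 c1 e]] := conj (aff_rows_add_rowspace tBD) ge0.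
apply/conv_rowsP; exists c; split=> //.
apply: (row_free_inj (row_base_free D)).
by rewrite affine_comb_row_coord // -e addrAC subrr add0r.
Qed.

Lemma slack_matrix_of_row_coord : slack_matrix_of (conv_rows V) M.
Proof.
exists V, (- B^T), a^T; split=> //; split.
  move=> t; rewrite conv_rows_row_coord.
  have entry j : (a + t *m B) 0 j = a^T j 0 - (- B^T *m t^T) j 0.
    by rewrite mulNmx -trmx_mul !mxE opprK.
  by split=> ge0 j; have := ge0 j; rewrite entry subr_ge0.
by rewrite opprK tr_row_mx !trmxK mul_row_col row_coord_mul addrC subrK.
Qed.

Lemma is_slack_matrix_row_neq k : row i0 M != row k M -> is_slack_matrix M.
Proof.
move=> neq_row; exists (\rank D), (conv_rows V).
split; last exact: slack_matrix_of_row_coord.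
apply: (@dim_ge1_conv_rows _ _ _ V i0 k); apply: contra neq_row => /eqP eqV.
have := congr1 (mulmx^~ B) eqV; rewrite -!row_mul row_coord_mul !linearB /=.
have const1 : const_mx 1 = 1 :> 'M[R]_1 by apply/rowP => j; rewrite !ord1 !mxE.
by rewrite !row_mul !row_const const1 mul1mx => /addIr/eqP.
Qed.

End ConvRowsSlackMatrix.

Lemma row_neq_rank_gt1 (R : fieldType) p q (M : 'M[R]_(p, q)) :
  (1 < \rank M)%N -> exists i k, row i M != row k M.
Proof.
case: p M => [|p] M rkM; first by have := rank_leq_row M; case: (\rank M) rkM.
have [/existsP [i /existsP [k neq_ik]] | ] :=
  boolP [exists i, exists k, row i M != row k M]; first by exists i, k.
move/existsPn/(_ 0)/existsPn => eq_row0.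
suff: (\rank M <= 1)%N by rewrite leqNgt rkM.
have -> : M = ones R p.+1 *m row 0 M.
  apply/row_matrixP => i; rewrite row_mul row_const (eqP (negPn (eq_row0 i))).
  by apply/rowP => j; rewrite !mxE big_ord1 !mxE mul1r.
exact: leq_trans (mxrankM_maxr _ _) (rank_leq_row _).
Qed.

Theorem corollary2p8 (R : realType) (p q : nat) (M : 'M[R]_(p, q)) :
  (forall i j, 0 <= M i j) -> (2 <= \rank M)%N ->
  (is_slack_matrix M <->
   (forall x : 'rV[R]_q, conv_rows M x <-> (aff_rows M x /\ nonneg_vec x))).
Proof.
move=> _ rkM; split=> [[n [P [_ slackM]]] | conv_rowsM].
  exact: slack_matrix_conv_rows slackM.
have [i [k neq_ik]] := row_neq_rank_gt1 rkM.
exact: (is_slack_matrix_row_neq conv_rowsM neq_ik).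
Qed.
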